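(* Let $A = \begin{pmatrix} 1 & 2 \\ 0 & 1 \end{pmatrix}$, $B = \begin{pmatrix} 1 & 0 \\ 2 & 1 \end{pmatrix}$ and $C = \begin{pmatrix} 2 & 1 \\ 1 & 1 \end{pmatrix}$, viewed as matrices over $\mathbb{Z}$. Then the semigroup generated by $A$, $B$, $C$ under matrix multiplication is free on $\{A, B, C\}$. That is, if $w_1 \cdots w_m$ and $v_1 \cdots v_k$ are products with each $w_i, v_j \in \{A,B,C\}$ and $w_1\cdots w_m = v_1 \cdots v_k$ as matrices, then $m = k$ and $w_i = v_i$ for all $i$. *)

From mathcomp Require Import all_boot all_order all_algebra.
Set Implicit Arguments. Unset Strict Implicit. Unset Printing Implicit Defensive.
Import GRing.Theory.
Local Open Scope ring_scope.

Definition mx2 (a b c d : int) : 'M[int]_2 :=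
  \matrix_(i < 2, j < 2)
    (if i == 0 :> nat then (if j == 0 :> nat then a else b)
     else (if j == 0 :> nat then c else d)).

Definition matA : 'M[int]_2 := mx2 1 2 0 1.
Definition matB : 'M[int]_2 := mx2 1 0 2 1.
Definition matC : 'M[int]_2 := mx2 2 1 1 1.

Definition word_prod (w : seq 'M[int]_2) : 'M[int]_2 := \prod_(M <- w) M.

From mathcomp Require Import all_boot all_order all_algebra.
From mathcomp Require Import zify.
Set Implicit Arguments. Unset Strict Implicit. Unset Printing Implicit Defensive.
Import GRing.Theory.
Local Open Scope ring_scope.

(* Ping-pong.  Let P be the set of integer matrices with nonnegative entries
   and no zero row.  Each generator maps P into itself, so every nonempty
   product of generators lies in P; moreover the translates A P, B P and C P
   are pairwise disjoint and avoid the identity.  Hence a product determines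
   its first letter, which can be cancelled (the generators are invertible),
   and freeness follows by induction on the length of the words. *)

Lemma mx2E a b c d :
  [/\ mx2 a b c d 0 0 = a, mx2 a b c d 0 1 = b, mx2 a b c d 1 0 = c
    & mx2 a b c d 1 1 = d].
Proof. by split; rewrite mxE. Qed.

Lemma mx2_ind (P : 'M[int]_2 -> Prop) :
  (forall a b c d, P (mx2 a b c d)) -> forall M, P M.
Proof.
move=> PM M; suff -> : M = mx2 (M 0 0) (M 0 1) (M 1 0) (M 1 1) by [].
apply/matrixP => -[[|[|//]] i] [[|[|//]] j]; rewrite mxE /=.
all: by congr (M _ _); apply: val_inj.
Qed.

Lemma mx2_inj a b c d a' b' c' d' :
  mx2 a b c d = mx2 a' b' c' d' -> [/\ a = a', b = b', c = c' & d = d'].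
Proof.
move=> /matrixP eq_mx.
by split; [move: (eq_mx 0 0) | move: (eq_mx 0 1) | move: (eq_mx 1 0)
  | move: (eq_mx 1 1)]; rewrite !mxE.
Qed.

Lemma mulmx2 a b c d a' b' c' d' :
  mx2 a b c d * mx2 a' b' c' d' =
  mx2 (a * a' + b * c') (a * b' + b * d') (c * a' + d * c') (c * b' + d * d').
Proof.
apply/matrixP => i j; rewrite -mulmxE !mxE !big_ord_recr big_ord0 /= !mxE /=.
by case: i => -[|[|//]] ?; case: j => -[|[|//]] ?; rewrite add0r.
Qed.

Lemma mx2_1 : 1 = mx2 1 0 0 1 :> 'M[int]_2.
Proof. by apply/matrixP => -[[|[|//]] i] [[|[|//]] j]; rewrite !mxE. Qed.

Definition nonneg_nz_rows (M : 'M[int]_2) : bool :=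
  [&& 0 <= M 0 0, 0 <= M 0 1, 0 <= M 1 0, 0 <= M 1 1,
      0 < M 0 0 + M 0 1 & 0 < M 1 0 + M 1 1].

Lemma nonneg_nz_rows_mx2 a b c d :
  nonneg_nz_rows (mx2 a b c d) =
  [&& 0 <= a, 0 <= b, 0 <= c, 0 <= d, 0 < a + b & 0 < c + d].
Proof. by rewrite /nonneg_nz_rows; case: (mx2E a b c d) => -> -> -> ->. Qed.

Definition gens := [:: matA; matB; matC].

Lemma gensP X : X \in gens -> [\/ X = matA, X = matB | X = matC].
Proof. by rewrite !inE => /or3P[] /eqP ->; [apply: Or31 | apply: Or32 | apply: Or33]. Qed.

Lemma gen_mul_nonneg_nz_rows X N :
  X \in gens -> nonneg_nz_rows N -> nonneg_nz_rows (X * N).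
Proof.
case/gensP=> ->; elim/mx2_ind: N => a b c d.
all: by rewrite mulmx2 !nonneg_nz_rows_mx2; lia.
Qed.

Lemma word_prod_nonneg_nz_rows w :
  all (fun M => M \in gens) w -> nonneg_nz_rows (word_prod w).
Proof.
elim: w => [|X w IHw] /=.
  by rewrite /word_prod big_nil mx2_1 nonneg_nz_rows_mx2.
by case/andP=> Xg wg; rewrite /word_prod big_cons gen_mul_nonneg_nz_rows ?IHw.
Qed.

Lemma gen_mul_neq1 X N : X \in gens -> nonneg_nz_rows N -> X * N <> 1.
Proof.
case/gensP=> ->; elim/mx2_ind: N => a b c d.
all: by rewrite mulmx2 mx2_1 nonneg_nz_rows_mx2 => ? /mx2_inj[]; lia.
Qed.

Lemma gen_mul_head X Y N1 N2 :
  X \in gens -> Y \in gens -> nonneg_nz_rows N1 -> nonneg_nz_rows N2 ->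
  X * N1 = Y * N2 -> X = Y.
Proof.
case/gensP=> ->; case/gensP=> -> //.
all: elim/mx2_ind: N1 => a b c d; elim/mx2_ind: N2 => a' b' c' d'.
all: by rewrite !mulmx2 !nonneg_nz_rows_mx2 => ? ? /mx2_inj[]; lia.
Qed.

Lemma gen_mulI X : X \in gens -> injective (GRing.mul X).
Proof.
case/gensP=> -> N1 N2; elim/mx2_ind: N1 => a b c d; elim/mx2_ind: N2 => a' b' c' d'.
all: by rewrite !mulmx2 => /mx2_inj[] *; congr mx2; lia.
Qed.

Theorem proposition1 (w v : seq 'M[int]_2) :
  all (fun M => M \in [:: matA; matB; matC]) w ->
  all (fun M => M \in [:: matA; matB; matC]) v ->
  word_prod w = word_prod v ->
  size w = size v /\ (forall i : nat, (i < size w)%N -> nth 0 w i = nth 0 v i).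
Proof.
elim: w v => [|X w IHw] [|Y v] //=; rewrite /word_prod ?big_nil ?big_cons.
- move=> _ /andP[Yg vg] /esym.
  by move/(gen_mul_neq1 Yg (word_prod_nonneg_nz_rows vg)).
- move=> /andP[Xg wg] _.
  by move/(gen_mul_neq1 Xg (word_prod_nonneg_nz_rows wg)).
move=> /andP[Xg wg] /andP[Yg vg] eq_prod.
have eqXY := gen_mul_head Xg Yg (word_prod_nonneg_nz_rows wg)
  (word_prod_nonneg_nz_rows vg) eq_prod.
rewrite -{}eqXY in eq_prod *.
have [eq_size eq_nth] := IHw v wg vg (gen_mulI Xg eq_prod).
split=> [|[|i] //= lt_i_w]; [by rewrite eq_size | exact: eq_nth].
Qed.
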